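(* Let $T$ be a finite rooted tree in which every inner node has at least two children, with node set $V$ and leaf set $L$. If $X\subseteq V\setminus L$ is thin, then there exists a pair $(\pi,\sigma)$ of injective maps from $X$ to $L$ that has unique request and identifies $X$.
   Context: A set $X\subseteq V\setminus L$ of inner nodes is thin if for every $x\in X$ other than the root, the parent of $x$ does not belong to $X$, and $x$ has at least one sibling (possibly a leaf) that does not belong to $X$. A pair $(\pi,\sigma)$ of injective maps from $X$ to $L$ identifies $X$ if for each $s\in X$, $s$ is the least common ancestor of $\pi(s)$ and $\sigma(s)$ (every node is its own ancestor). For $s\in X$, a node $y$ is $s$-requested in $(\pi,\sigma)$ if $y$ lies on the path of $T$ from $\pi(s)$ to $\sigma(s)$; the pair has unique request if every node is $s$-requested for at most one $s\in X$. *)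

(* A finite rooted tree is given by a finite node type V,
   a root r and a parent map par : V -> V with par r = r, such that every
   node reaches the root by iterating par. *)
From mathcomp Require Import all_boot.
Set Implicit Arguments. Unset Strict Implicit. Unset Printing Implicit Defensive.

Section Tree.
Variables (V : finType) (r : V) (par : V -> V).

Definition rooted_tree : Prop :=
  par r = r /\ forall v : V, exists k : nat, iter k par v = r.

Definition anc (u v : V) : bool := [exists k : 'I_#|V|.+1, iter k par v == u].

Definition children (v : V) : {set V} := [set c | (c != r) && (par c == v)].

Definition is_leaf (v : V) : bool := children v == set0.
Definition leaves : {set V} := [set v | is_leaf v].
Definition inner_nodes : {set V} := [set v | ~~ is_leaf v].

Definition full_branching : Prop :=
  forall v : V, ~~ is_leaf v -> 1 < #|children v|.

Definition thin (X : {set V}) : Prop :=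
  X \subset inner_nodes /\
  forall x, x \in X -> x != r ->
    par x \notin X /\
    exists y : V, [/\ y != r, par y = par x, y != x & y \notin X].

Definition is_lca (s a b : V) : Prop :=
  anc s a /\ anc s b /\ forall c, anc c a -> anc c b -> anc c s.

(* y lies on the tree path from a to b: y is an ancestor of a or of b,
   and a descendant of every common ancestor of a and b (i.e. of their lca) *)
Definition on_path (y a b : V) : Prop :=
  (anc y a || anc y b) /\ forall c, anc c a -> anc c b -> anc c y.

Definition identifies (X : {set V}) (pi sigma : V -> V) : Prop :=
  forall s, s \in X -> is_lca s (pi s) (sigma s).

Definition requested (pi sigma : V -> V) (s y : V) : Prop :=
  on_path y (pi s) (sigma s).

Definition unique_request (X : {set V}) (pi sigma : V -> V) : Prop :=
  forall y s1 s2, s1 \in X -> s2 \in X ->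
    requested pi sigma s1 y -> requested pi sigma s2 y -> s1 = s2.

Definition inj_to_leaves (X : {set V}) (f : V -> V) : Prop :=
  {in X &, injective f} /\ forall x, x \in X -> f x \in leaves.

End Tree.

From mathcomp Require Import all_boot.
Set Implicit Arguments.
Unset Strict Implicit.
Unset Printing Implicit Defensive.

(* Every inner node has a child outside X: if one child lies in X, thinness
   gives it a sibling outside X.  Hence from any node outside X one can walk
   down to a leaf along a path avoiding X.  For s in X, take two distinct
   children of s (they avoid X, since their parent is in X) and let pi s and
   sigma s be leaves reached from them in this way.  Then s is their lca, and
   the path between them meets X only at its top s.  If y were requested by
   s1 and s2, say with s1 above s2, then s2 would lie strictly below s1 on
   the path of s1, hence outside X.  Injectivity follows because pi s and
   sigma s are requested by s. *)

Section Ancestors.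
Variables (V : finType) (par : V -> V).

Lemma ancP u v : reflect (exists k, iter k par v = u) (anc par u v).
Proof.
apply: (iffP existsP) => [[k /eqP <-]|[k <-]]; first by exists k.
have par_k := fconnect_iter par k v.
have lt_idx : findex par v (iter k par v) < #|V|.+1.
  exact: leq_trans (findex_max par_k) (leqW (max_card _)).
by exists (Ordinal lt_idx); rewrite /= iter_findex.
Qed.

Lemma anc_refl v : anc par v v.
Proof. by apply/ancP; exists 0. Qed.

Lemma anc_par v : anc par (par v) v.
Proof. by apply/ancP; exists 1. Qed.

Lemma anc_trans a b c : anc par a b -> anc par b c -> anc par a c.
Proof.
by move=> /ancP[i <-] /ancP[j <-]; apply/ancP; exists (i + j); rewrite iterD.
Qed.

Lemma anc_comparable a b v :
  anc par a v -> anc par b v -> anc par a b || anc par b a.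
Proof.
move=> /ancP[i <-] /ancP[j <-]; have [le_ij|/ltnW le_ji] := leqP i j.
  by apply/orP; right; apply/ancP; exists (j - i); rewrite -iterD subnK.
by apply/orP; left; apply/ancP; exists (i - j); rewrite -iterD subnK.
Qed.

Lemma anc_eqVpar w c : anc par w c -> w = c \/ anc par w (par c).
Proof.
case/ancP=> [[|k] <-]; first by left.
by right; apply/ancP; exists k; rewrite -iterSr.
Qed.

Lemma on_path_left a b : on_path par a a b.
Proof. by split=> [|c]; rewrite ?anc_refl. Qed.

Lemma on_path_right a b : on_path par b a b.
Proof. by split=> [|c]; rewrite ?anc_refl ?orbT. Qed.

End Ancestors.

Section RootedTree.
Variables (V : finType) (r : V) (par : V -> V).
Hypothesis tree : rooted_tree r par.

Lemma iter_par_root m : iter m par r = r.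
Proof. by elim: m => //= m ->; case: tree. Qed.

Lemma iter_cycle_root a n : iter n.+1 par a = a -> a = r.
Proof.
move=> cyc; have iter_cyc m : iter (m * n.+1) par a = a.
  by elim: m => // m IHm; rewrite mulSn iterD IHm cyc.
have [k reach_k] := tree.2 a.
have le_k : k <= k * n.+1 by rewrite leq_pmulr.
by rewrite -(iter_cyc k) -(subnK le_k) iterD reach_k iter_par_root.
Qed.

Lemma anc_antisym a b : anc par a b -> anc par b a -> a = b.
Proof.
move=> /ancP[i ab] /ancP[j ba]; case: i ab => [//|i] ab.
have /iter_cycle_root a_r : iter (i + j).+1 par a = a.
  by rewrite -addSn iterD ba ab.
by rewrite -ba a_r iter_par_root.
Qed.

Lemma par_neq c : c != r -> par c != c.
Proof. by apply: contra => /eqP /(@iter_cycle_root c 0) ->. Qed.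

Lemma anc_child s c : c \in children r par s -> anc par s c.
Proof. by rewrite inE => /andP[_ /eqP <-]; exact: anc_par. Qed.

Lemma child_anc_proper_desc s c w l :
  c \in children r par s -> anc par s w -> w != s ->
  anc par w l -> anc par c l -> anc par c w.
Proof.
rewrite inE => /andP[_ /eqP par_c] sw ws wl cl.
case/orP: (anc_comparable cl wl) => // /anc_eqVpar[-> | ].
  exact: anc_refl.
by rewrite par_c => ws'; rewrite (anc_antisym ws' sw) eqxx in ws.
Qed.

Lemma anc_children_eq s c1 c2 :
  c1 \in children r par s -> c2 \in children r par s ->
  anc par c1 c2 -> c1 = c2.
Proof.
rewrite !inE => /andP[c1_r /eqP par_c1] /andP[_ /eqP par_c2] /anc_eqVpar[// | ].
rewrite par_c2 -par_c1 => c1_par; have := anc_antisym c1_par (anc_par par c1).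
by move/eqP; rewrite eq_sym (negbTE (par_neq c1_r)).
Qed.

Lemma proper_desc_child s c :
  c \in children r par s -> [set w | anc par c w] \proper [set w | anc par s w].
Proof.
move=> ch; have sc := anc_child ch; apply/properP; split.
  by apply/subsetP=> w; rewrite !inE; exact: anc_trans.
exists s; rewrite !inE ?anc_refl //; apply/negP=> cs.
move: ch; rewrite inE (anc_antisym cs sc) => /andP[/par_neq s_r /eqP par_s].
by rewrite par_s eqxx in s_r.
Qed.

Lemma is_lca_children_desc s c1 c2 l1 l2 :
  c1 \in children r par s -> c2 \in children r par s -> c1 != c2 ->
  anc par c1 l1 -> anc par c2 l2 -> is_lca par s l1 l2.
Proof.
move=> ch1 ch2 c1_c2 cl1 cl2.
have sl1 := anc_trans (anc_child ch1) cl1.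
have sl2 := anc_trans (anc_child ch2) cl2.
split=> //; split=> // a al1 al2.
case/orP: (anc_comparable al1 sl1) => // sa.
have [-> | a_s] := eqVneq a s; first exact: anc_refl.
have c1a := child_anc_proper_desc ch1 sa a_s al1 cl1.
have c2a := child_anc_proper_desc ch2 sa a_s al2 cl2.
case/orP: (anc_comparable c1a c2a) => [/(anc_children_eq ch1 ch2) | ].
  by move/eqP; rewrite (negbTE c1_c2).
by move/(anc_children_eq ch2 ch1)/eqP; rewrite eq_sym (negbTE c1_c2).
Qed.

End RootedTree.

Section ThinSet.
Variables (V : finType) (r : V) (par : V -> V) (X : {set V}).
Hypotheses (tree : rooted_tree r par) (full : full_branching r par)
  (thinX : thin r par X).

Lemma exists_child_notin v :
  ~~ is_leaf r par v -> exists2 c, c \in children r par v & c \notin X.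
Proof.
move=> /full /card_gt1P[c [_ [ch _ _]]].
have [cX|] := boolP (c \in X); last by exists c.
move: ch; rewrite inE => /andP[c_r /eqP par_c].
have [_ [y [y_r par_y _ yX]]] := thinX.2 c cX c_r.
by exists y; rewrite // inE y_r par_y par_c eqxx.
Qed.

Lemma child_notin s c : s \in X -> c \in children r par s -> c \notin X.
Proof.
move=> sX; rewrite inE => /andP[c_r /eqP par_c]; apply/negP => cX.
by have [] := thinX.2 c cX c_r; rewrite par_c sX.
Qed.

Lemma exists_leaf_avoiding v : v \notin X ->
  exists l, [/\ l \in leaves r par, anc par v l &
                forall w, anc par v w -> anc par w l -> w \notin X].
Proof.
have [n] := ubnP #|[set w | anc par v w]|; elim: n v => // n IHn v.
rewrite ltnS => card_v vX.
have [leaf_v | /exists_child_notin[c ch cX]] := boolP (is_leaf r par v).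
  exists v; split; rewrite ?inE ?anc_refl // => w vw wv.
  by rewrite -(anc_antisym tree vw wv).
have [|l [leaf_l cl avoid_c]] := IHn c _ cX.
  exact: leq_trans (proper_card (proper_desc_child tree ch)) card_v.
exists l; split=> //; first exact: anc_trans (anc_child ch) cl.
move=> w vw wl; have [-> //|wv] := eqVneq w v.
exact/avoid_c/wl/(child_anc_proper_desc tree ch vw wv wl cl).
Qed.

Definition private_leaf_pair s l1 l2 :=
  [/\ l1 \in leaves r par, l2 \in leaves r par, is_lca par s l1 l2 &
      forall w, anc par s w -> w != s ->
        anc par w l1 || anc par w l2 -> w \notin X].

Lemma exists_private_leaf_pair s :
  s \in X -> exists l1 l2, private_leaf_pair s l1 l2.
Proof.
move=> sX; have inner_s : ~~ is_leaf r par s.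
  by move/subsetP: thinX.1 => /(_ s sX); rewrite inE.
have /card_gt1P[c1 [c2 [ch1 ch2 c1_c2]]] := full inner_s.
have [l1 [leaf1 cl1 avoid1]] := exists_leaf_avoiding (child_notin sX ch1).
have [l2 [leaf2 cl2 avoid2]] := exists_leaf_avoiding (child_notin sX ch2).
exists l1, l2; split=> //.
  exact: is_lca_children_desc ch1 ch2 c1_c2 cl1 cl2.
move=> w sw ws /orP[wl | wl].
  exact/avoid1/wl/(child_anc_proper_desc tree ch1 sw ws wl cl1).
exact/avoid2/wl/(child_anc_proper_desc tree ch2 sw ws wl cl2).
Qed.

End ThinSet.

Section Requests.
Variables (V : finType) (par : V -> V) (X : {set V}) (pi sigma : V -> V).

Lemma requested_anc s y :
  is_lca par s (pi s) (sigma s) -> requested par pi sigma s y -> anc par s y.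
Proof. by move=> [s_pi [s_sigma _]] [_]; apply. Qed.

Lemma unique_request_of_private_paths :
  identifies par X pi sigma ->
  (forall s w, s \in X -> anc par s w -> w != s ->
     anc par w (pi s) || anc par w (sigma s) -> w \notin X) ->
  unique_request par X pi sigma.
Proof.
move=> lca private.
suff ordered y s1 s2 : s1 \in X -> s2 \in X -> requested par pi sigma s1 y ->
    requested par pi sigma s2 y -> anc par s1 s2 -> s1 = s2.
  move=> y s1 s2 X1 X2 req1 req2.
  have s1y := requested_anc (lca s1 X1) req1.
  have s2y := requested_anc (lca s2 X2) req2.
  case/orP: (anc_comparable s1y s2y); first exact: ordered req1 req2.
  by move/(ordered _ _ _ X2 X1 req2 req1).
move=> X1 X2 [y_end _] req2 s1_s2; have [-> //|s2_s1] := eqVneq s2 s1.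
suff : anc par s2 (pi s1) || anc par s2 (sigma s1).
  by move/(private s1 s2 X1 s1_s2 s2_s1); rewrite X2.
have s2_y := requested_anc (lca s2 X2) req2.
by case/orP: y_end => y_end; apply/orP; [left|right]; exact: anc_trans y_end.
Qed.

Lemma unique_request_inj f :
  unique_request par X pi sigma -> (forall s, requested par pi sigma s (f s)) ->
  {in X &, injective f}.
Proof.
move=> uniq_req req s1 s2 X1 X2 f12.
by apply: (uniq_req (f s1)); rewrite // f12.
Qed.

End Requests.

Theorem lemma3p8 (V : finType) (r : V) (par : V -> V) (X : {set V}) :
  rooted_tree r par ->
  full_branching r par ->
  thin r par X ->
  exists pi sigma : V -> V,
    [/\ inj_to_leaves r par X pi, inj_to_leaves r par X sigma,
        unique_request par X pi sigma & identifies par X pi sigma].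
Proof.
move=> tree full thinX.
have /fin_all_exists[ls pair_ls] s :
    exists l : V * V, s \in X -> private_leaf_pair r par X s l.1 l.2.
  have [sX | _] := boolP (s \in X); last by exists (s, s).
  have [l1 [l2 pair]] := exists_private_leaf_pair tree full thinX sX.
  by exists (l1, l2).
pose pi s := (ls s).1; pose sigma s := (ls s).2.
have lca : identifies par X pi sigma by move=> s /pair_ls[].
have uniq_req : unique_request par X pi sigma.
  by apply: unique_request_of_private_paths => // s w /pair_ls[_ _ _]; apply.
exists pi, sigma; split=> //; split.
- exact: unique_request_inj uniq_req (fun s => on_path_left par _ _).
- by move=> s /pair_ls[].
- exact: unique_request_inj uniq_req (fun s => on_path_right par _ _).
- by move=> s /pair_ls[].
Qed.
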